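(* Let $m>2$ be odd and $n>0$ even, with $\gcd(m,n)=1$. A tuple $\mathbf{a}=(a_0,\dots,a_{n-1})\in\mathbf{Z}_m^n$ belongs to $\mathcal{C}_m^n$ if and only if $\sigma(\mathbf{a})=\sum_{i=0}^{n-1}(-1)^ia_i\equiv0\pmod m$.
   Context: $\mathbf{Z}_m$ denotes the integers modulo $m$. $T:\mathbf{Z}_m^n\to\mathbf{Z}_m^n$ is $T(a_0,\dots,a_{n-1})=(a_0+a_1,a_1+a_2,\dots,a_{n-1}+a_0)$. $\mathcal{C}_m^n$ is the set of tuples lying in a cycle of some sequence $(T^k\mathbf{b})_{k\ge0}$, i.e. the set of $\mathbf{a}\in\mathbf{Z}_m^n$ such that $T^P\mathbf{a}=\mathbf{a}$ for some positive integer $P$. *)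

From mathcomp Require Import all_boot all_order all_algebra.
Set Implicit Arguments. Unset Strict Implicit. Unset Printing Implicit Defensive.
Import GRing.Theory.
Local Open Scope ring_scope.

Definition csucc (n : nat) (i : 'I_n) : 'I_n :=
  match n return 'I_n -> 'I_n with
  | 0 => fun i => i
  | k.+1 => fun i => ordS i
  end i.

Definition Tmap (m n : nat) (a : {ffun 'I_n -> 'Z_m}) : {ffun 'I_n -> 'Z_m} :=
  [ffun i => a i + a (csucc i)].

(* C_m^n : tuples lying on a cycle, i.e. T^P a = a for some P > 0 *)
Definition in_cycle (m n : nat) (a : {ffun 'I_n -> 'Z_m}) : Prop :=
  exists P : nat, (0 < P)%N /\ iter P (@Tmap m n) a = a.

Definition alt_sum (m n : nat) (a : {ffun 'I_n -> 'Z_m}) : 'Z_m :=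
  \sum_(i < n) (-1) ^+ i * a i.

(* For even n the alternating sum of T a vanishes: the two shifted copies of
   a cancel, the wrap-around terms carrying the signs (-1)^(n-1) and 1.  Hence
   every tuple on a cycle, being T of its predecessor, has sigma = 0.
   Conversely, if T a = T b then c = a - b satisfies c_(i+1) = - c_i, so
   c_i = (-1)^i c_0 and sigma(c) = n c_0; as gcd(m, n) = 1, equal alternating
   sums force c = 0.  So T maps the finite set {sigma = 0} injectively into
   itself, i.e. permutes it, and each of its elements is periodic. *)
From mathcomp Require Import all_boot all_order all_algebra ring.
Set Implicit Arguments.
Unset Strict Implicit.
Unset Printing Implicit Defensive.
Import GRing.Theory.
Local Open Scope ring_scope.

Lemma Zp_mulrn_eq0 (m n : nat) (c : 'Z_m) :
  (1 < m)%N -> coprime m n -> (c *+ n == 0) = (c == 0).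
Proof.
move=> m_gt1 cop_mn; apply/eqP/eqP => [|->]; last exact: mul0rn.
move/(congr1 val); rewrite Zp_mulrn /= => mod_eq0; apply/val_inj => /=; move: mod_eq0.
move: (nat_of_ord c) (ltn_ord c) => j; rewrite Zp_cast // => lt_j_m /eqP.
by rewrite -/(dvdn _ _) Gauss_dvdl // /dvdn modn_small // => /eqP.
Qed.

Lemma iter_inj_in_cancel (T : Type) (P : pred T) (f : T -> T) (x : T) (i d : nat) :
  {homo f : y / P y} -> {in P &, injective f} -> P x ->
  iter (i + d) f x = iter i f x -> iter d f x = x.
Proof.
move=> fP f_inj Px; have P_iter j : P (iter j f x) by elim: j => //= j /fP.
elim: i => // i IH; rewrite addSn /= => eq_iter.
exact/IH/(f_inj _ _ (P_iter _) (P_iter _) eq_iter).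
Qed.

Lemma iter_periodic_in (T : finType) (P : pred T) (f : T -> T) (x : T) :
  {homo f : y / P y} -> {in P &, injective f} -> P x ->
  exists2 p, (0 < p)%N & iter p f x = x.
Proof.
move=> fP f_inj Px; pose g (i : 'I_#|T|.+1) := iter i f x.
have /injectivePn [i [j neq_ij eq_ij]] : ~~ injectiveb g.
  by apply/injectiveP => /leq_card; rewrite card_ord ltnn.
wlog lt_ij : i j neq_ij eq_ij / (i < j)%N.
  move=> IH; case: (ltngtP i j) => [|lt_ji|/val_inj eq_ij']; first exact: IH.
  - by apply: (IH j i); rewrite // eq_sym.
  - by rewrite eq_ij' eqxx in neq_ij.
exists (j - i)%N; first by rewrite subn_gt0.
apply: (@iter_inj_in_cancel _ P f x i) fP f_inj Px _.
by rewrite (subnKC (ltnW lt_ij)); symmetry; exact: eq_ij.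
Qed.

Section AlternatingSigns.
Variables (R : pzRingType) (k : nat) (c : 'I_k.+1 -> R).
Hypothesis c_ordS : forall i, c (ordS i) = - c i.

Lemma ordS_opp_alternating (i : 'I_k.+1) : c i = (-1) ^+ i * c ord0.
Proof.
suff c_inord j : (j < k.+1)%N -> c (inord j) = (-1) ^+ j * c ord0.
  by rewrite -c_inord ?inord_val.
elim: j => [|j IH] lt_j_n.
  by rewrite expr0 mul1r; congr c; apply/val_inj; rewrite /= inordK.
have -> : (inord j.+1 : 'I_k.+1) = ordS (inord j).
  by apply/val_inj; rewrite /= !inordK ?modn_small // ltnW.
by rewrite c_ordS IH ?(ltnW lt_j_n) // exprS mulN1r mulNr.
Qed.

Lemma ordS_opp_sum_sign : \sum_(i < k.+1) (-1) ^+ i * c i = c ord0 *+ k.+1.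
Proof.
rewrite -[in RHS](card_ord k.+1) -sumr_const; apply: eq_bigr => i _.
by rewrite ordS_opp_alternating mulrA -exprD -signr_odd addnn odd_double expr0 mul1r.
Qed.
End AlternatingSigns.

Section DucciMap.

Variables m k : nat.
Implicit Types a b : {ffun 'I_k.+1 -> 'Z_m}.

Lemma TmapE a i : Tmap a i = a i + a (ordS i).
Proof. by rewrite ffunE. Qed.

Lemma alt_sum_Tmap a : ~~ odd k.+1 -> alt_sum (Tmap a) = 0.
Proof.
rewrite /= negbK => odd_k; rewrite /alt_sum.
under eq_bigr do rewrite TmapE mulrDr.
rewrite big_split /= [X in X + _]big_ord_recl [X in _ + X]big_ord_recr /=.
have -> : ordS (@ord_max k) = ord0 by apply/val_inj; rewrite /= modnn.
under [X in _ + (X + _)]eq_bigr => i _.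
  have -> : ordS (widen_ord (leqnSn k) i) = lift ord0 i.
    by apply/val_inj; rewrite /= modn_small // ltnS.
  over.
rewrite -[(-1) ^+ k]signr_odd odd_k expr1.
under eq_bigr do rewrite /bump leq0n add1n exprS mulN1r mulNr.
by rewrite sumrN expr0 mul1r mulN1r addrA subrK subrr.
Qed.

Lemma Tmap_inj_same_alt_sum a b : (1 < m)%N -> coprime m k.+1 ->
  alt_sum a = alt_sum b -> Tmap a = Tmap b -> a = b.
Proof.
move=> m_gt1 cop_mk eq_sum eq_T; pose c i := a i - b i.
have c_ordS i : c (ordS i) = - c i.
  have := congr1 (fun f : {ffun _ -> _} => f i) eq_T; rewrite /= !TmapE => eq_Ti.
  have a_ordS : a (ordS i) = b i + b (ordS i) - a i by rewrite -eq_Ti; ring.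
  by rewrite /c a_ordS; ring.
have /eqP : \sum_(i < k.+1) (-1) ^+ i * c i = 0.
  under eq_bigr do rewrite mulrBr.
  by rewrite sumrB -!/(alt_sum _) eq_sum subrr.
rewrite ordS_opp_sum_sign // Zp_mulrn_eq0 // => /eqP c0_0.
apply/ffunP => i; apply/eqP; rewrite -subr_eq0.
by rewrite -/(c i) (ordS_opp_alternating c_ordS) c0_0 mulr0.
Qed.

End DucciMap.

Theorem proposition6p2 (m n : nat) :
  (2 < m)%N -> odd m -> (0 < n)%N -> ~~ odd n -> coprime m n ->
  forall a : {ffun 'I_n -> 'Z_m}, in_cycle a <-> alt_sum a = 0.
Proof.
move=> m_gt2 _; case: n => // k _ n_even cop_mn a.
have m_gt1 : (1 < m)%N := ltnW m_gt2.
split=> [[[|p] [//= _ <-]]|/eqP sum_a0]; first exact: alt_sum_Tmap.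
have Tmap_homo : {homo @Tmap m k.+1 : b / alt_sum b == 0}.
  by move=> b _; rewrite alt_sum_Tmap.
have Tmap_inj : {in [pred b | alt_sum b == 0] &, injective (@Tmap m k.+1)}.
  by move=> b c /eqP b0 /eqP c0; apply: Tmap_inj_same_alt_sum; rewrite ?b0 ?c0.
have [p p_gt0 a_periodic] := iter_periodic_in Tmap_homo Tmap_inj sum_a0.
by exists p.
Qed.
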